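(* Let $\mathsf{X}\subset\mathbb{R}^p$ and $\mathsf{Y}\subset\mathbb{R}^q$, and let $\tilde s(x\mid\gamma)$ (a pdf in $x\in\mathsf{X}$ for each $\gamma\in\mathsf{Y}$) and $\tilde h(\gamma\mid x)$ (a pdf in $\gamma\in\mathsf{Y}$ for each $x\in\mathsf{X}$) be conditional densities, and define the Markov transition densities $k(x,x')=\int_{\mathsf{Y}}\tilde s(x'\mid\gamma)\tilde h(\gamma\mid x)d\gamma$ on $\mathsf{X}$ and $\tilde k(\gamma,\gamma')=\int_{\mathsf{X}}\tilde h(\gamma'\mid x)\tilde s(x\mid\gamma)dx$ on $\mathsf{Y}$. Suppose $\int_{\mathsf{X}}V(x')k(x,x')dx'\le\lambda V(x)+L$ for all $x\in\mathsf{X}$, where $V:\mathsf{X}\to[0,\infty)$, $\lambda\in[0,1)$ and $L<\infty$. Let $c$ be a constant such that $\tilde V(\gamma)=\int_{\mathsf{X}}V(x)\tilde s(x\mid\gamma)dx+c$ is finite and non-negative for all $\gamma\in\mathsf{Y}$. Then for all $\gamma\in\mathsf{Y}$, $\int_{\mathsf{Y}}\tilde V(\gamma')\tilde k(\gamma,\gamma')d\gamma'\le\lambda\tilde V(\gamma)+\tilde L$, where $\tilde L=L+c(1-\lambda)$. *)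

From HB Require Import structures.
From mathcomp Require Import all_boot all_order all_algebra.
From mathcomp Require Import all_classical all_reals all_analysis.
Set Implicit Arguments. Unset Strict Implicit. Unset Printing Implicit Defensive.
Import Order.TTheory GRing.Theory Num.Theory.
Local Open Scope classical_set_scope.
Local Open Scope ring_scope.
Local Open Scope ereal_scope.

(* Conventions: s x g stands for \tilde s(x | g), h g x for \tilde h(g | x). *)

Definition is_pdf (R : realType) (d : measure_display) (T : measurableType d)
  (mu : {measure set T -> \bar R}) (D : set T) (f : T -> R) : Prop :=
  measurable_fun D f /\ (forall t, D t -> (0 <= f t)%R) /\
  \int[mu]_(t in D) (f t)%:E = 1.

Definition kX (R : realType) (d2 : measure_display) (T1 : Type)
  (T2 : measurableType d2) (nu : {measure set T2 -> \bar R}) (Y : set T2)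
  (s : T1 -> T2 -> R) (h : T2 -> T1 -> R) (x x' : T1) : \bar R :=
  \int[nu]_(g in Y) (s x' g * h g x)%:E.

Definition kY (R : realType) (d1 : measure_display) (T1 : measurableType d1)
  (T2 : Type) (mu : {measure set T1 -> \bar R}) (X : set T1)
  (s : T1 -> T2 -> R) (h : T2 -> T1 -> R) (g g' : T2) : \bar R :=
  \int[mu]_(x in X) (h g' x * s x g)%:E.

Definition Vtilde (R : realType) (d1 : measure_display) (T1 : measurableType d1)
  (T2 : Type) (mu : {measure set T1 -> \bar R}) (X : set T1)
  (s : T1 -> T2 -> R) (V : T1 -> R) (c : R) (g : T2) : \bar R :=
  \int[mu]_(x in X) (V x * s x g)%:E + c%:E.

(* Write m(g) = \int_X V(x) s(x|g) dx, so that Vtilde = m + c.  Tonelli's theorem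
   on Y x X x X turns \int_Y m(g') ktilde(g,g') dg' into
   \int_X s(x|g) (\int_X V(x') k(x,x') dx') dx, which the drift condition on V bounds
   by \int_X s(x|g) (lam V(x) + L) dx = lam m(g) + L.  Since ktilde(g,.) and s(.|g)
   are probability densities, the constants c and L pass through the integrals, and
   lam m(g) + L + c = lam Vtilde(g) + L + c (1 - lam).  To use Tonelli on the full
   product spaces, s, h and V are first extended by zero outside X x Y, Y x X and X. *)

From Pilot Require Import Defs.
From HB Require Import structures.
From mathcomp Require Import all_boot all_order all_algebra.
From mathcomp Require Import all_classical all_reals all_analysis.
From mathcomp Require Import measurable_realfun.
From mathcomp Require Import ring.

Set Implicit Arguments. Unset Strict Implicit. Unset Printing Implicit Defensive.
Import Order.TTheory GRing.Theory Num.Theory.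
Local Open Scope classical_set_scope.
Local Open Scope ring_scope.
Local Open Scope ereal_scope.

(* A copy of [mu] carrying the sigma-finite measure structure that the library's
   Fubini-Tonelli theorem requires. *)
Definition sigma_finite_measure_of d (T : measurableType d) (R : realType)
  (mu : {measure set T -> \bar R}) of sigma_finite setT mu : set T -> \bar R := mu.

Section sigma_finite_measure_of.
Context d (T : measurableType d) (R : realType) (mu : {measure set T -> \bar R}).
Hypothesis mu_sf : sigma_finite setT mu.
HB.instance Definition _ := Measure.copy (sigma_finite_measure_of mu_sf) mu.
HB.instance Definition _ :=
  @Measure_isSigmaFinite.Build d T R (sigma_finite_measure_of mu_sf) mu_sf.
End sigma_finite_measure_of.

Lemma measurableT_comp_pair dW d1 d2 d3 (W : measurableType dW)
    (T1 : measurableType d1) (T2 : measurableType d2) (T3 : measurableType d3)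
    (f : T1 * T2 -> T3) (a : W -> T1) (b : W -> T2) :
  measurable_fun setT f -> measurable_fun setT a -> measurable_fun setT b ->
  measurable_fun setT (fun w => f (a w, b w)).
Proof.
by move=> mf ma mb; apply: measurableT_comp mf _; exact: measurable_fun_pair.
Qed.

Section fubini_tonelli_rect.
Context d1 d2 (T1 : measurableType d1) (T2 : measurableType d2) (R : realType).
Variables (A : set T1) (B : set T2) (mA : measurable A) (mB : measurable B).
Variable f : T1 * T2 -> \bar R.
Hypothesis mf : measurable_fun (A `*` B) f.
Hypothesis f0 : forall z, (A `*` B) z -> 0 <= f z.

Let g : T1 * T2 -> \bar R := f \_ (A `*` B).

Let mg : measurable_fun setT g.
Proof. exact/(measurable_restrictT _ (measurableX mA mB)). Qed.

Let g0 z : 0 <= g z.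
Proof. by rewrite /g patchE; case: ifPn => // /set_mem; exact: f0. Qed.

Let integral_xsection (m2 : {measure set T2 -> \bar R}) x :
  \int[m2]_y g (x, y) = ((fun x => \int[m2]_(y in B) f (x, y)) \_ A) x.
Proof.
rewrite patchE; case: ifPn => [/set_mem Ax|Ax].
  rewrite [RHS]integral_mkcond; apply: eq_integral => y _.
  by rewrite /g !patchE in_setX mem_set.
by rewrite integral0_eq // => y _; rewrite /g patchE in_setX (negPf Ax).
Qed.

Let integral_ysection (m1 : {measure set T1 -> \bar R}) y :
  \int[m1]_x g (x, y) = ((fun y => \int[m1]_(x in A) f (x, y)) \_ B) y.
Proof.
rewrite patchE; case: ifPn => [/set_mem By|By].
  rewrite [RHS]integral_mkcond; apply: eq_integral => x _.
  by rewrite /g !patchE in_setX (mem_set By) andbT.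
by rewrite integral0_eq // => x _; rewrite /g patchE in_setX (negPf By) andbF.
Qed.

Lemma measurable_fun_fubini_tonelli_rect_F
    (m2 : {sigma_finite_measure set T2 -> \bar R}) :
  measurable_fun A (fun x => \int[m2]_(y in B) f (x, y)).
Proof.
apply/(measurable_restrictT _ mA); rewrite -(funext (integral_xsection m2)).
exact: measurable_fun_fubini_tonelli_F.
Qed.

Lemma measurable_fun_fubini_tonelli_rect_G
    (m1 : {sigma_finite_measure set T1 -> \bar R}) :
  measurable_fun B (fun y => \int[m1]_(x in A) f (x, y)).
Proof.
apply/(measurable_restrictT _ mB); rewrite -(funext (integral_ysection m1)).
exact: measurable_fun_fubini_tonelli_G.
Qed.

Lemma fubini_tonelli_rect (m1 : {sigma_finite_measure set T1 -> \bar R})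
    (m2 : {sigma_finite_measure set T2 -> \bar R}) :
  \int[m1]_(x in A) \int[m2]_(y in B) f (x, y) =
  \int[m2]_(y in B) \int[m1]_(x in A) f (x, y).
Proof.
rewrite integral_mkcond [RHS]integral_mkcond.
rewrite -(funext (integral_xsection m2)) -(funext (integral_ysection m1)).
exact: fubini_tonelli.
Qed.

End fubini_tonelli_rect.

Section integral_shift.
Context d (T : measurableType d) (R : realType) (m : {measure set T -> \bar R}).
Variables (D : set T) (mD : measurable D) (w : T -> \bar R).
Hypotheses (mw : measurable_fun D w) (w0 : forall x, D x -> 0 <= w x).
Hypothesis w1 : \int[m]_(x in D) w x = 1.

Let integral_shift_ge0 (a : T -> \bar R) (c : R) : (0 <= c)%R ->
  measurable_fun D a -> (forall x, D x -> 0 <= a x) ->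
  \int[m]_(x in D) ((a x + c%:E) * w x) = \int[m]_(x in D) (a x * w x) + c%:E.
Proof.
move=> c0 ma a0.
under eq_integral => x /set_mem Dx do rewrite ge0_muleDl ?lee_fin ?a0 //.
rewrite ge0_integralD //; first by rewrite ge0_integralZl_EFin // w1 mule1.
- by move=> x Dx; rewrite mule_ge0 ?a0 ?w0.
- exact: emeasurable_funM.
- by move=> x Dx; rewrite mule_ge0 ?lee_fin ?w0.
- exact: measurable_funeM.
Qed.

Lemma integral_shift (a : T -> \bar R) (c : R) : measurable_fun D a ->
  (forall x, D x -> 0 <= a x) -> (forall x, D x -> 0 <= a x + c%:E) ->
  \int[m]_(x in D) ((a x + c%:E) * w x) = \int[m]_(x in D) (a x * w x) + c%:E.
Proof.
move=> ma a0 ac0; have [c0|c0] := leP 0%R c; first exact: integral_shift_ge0.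
have mac : measurable_fun D (fun x => a x + c%:E).
  by apply: emeasurable_funD => //; exact: measurable_cst.
have /integral_shift_ge0/(_ mac ac0) : (0 <= - c)%R by rewrite oppr_ge0 ltW.
under eq_integral do rewrite -addeA -EFinD subrr adde0.
by move=> ->; rewrite -addeA -EFinD addNr adde0.
Qed.

End integral_shift.

Section marginal_chains.
Context (R : realType) d1 d2 (T1 : measurableType d1) (T2 : measurableType d2).
Variables (mu : {sigma_finite_measure set T1 -> \bar R})
  (nu : {sigma_finite_measure set T2 -> \bar R}).
Variables (X : set T1) (Y : set T2) (mX : measurable X) (mY : measurable Y).
Variables (s : T1 -> T2 -> R) (h : T2 -> T1 -> R).
Hypothesis ms : measurable_fun setT (fun z : T1 * T2 => s z.1 z.2).
Hypothesis mh : measurable_fun setT (fun z : T2 * T1 => h z.1 z.2).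
Hypothesis s_ge0 : forall x g, (0 <= s x g)%R.
Hypothesis h_ge0 : forall g x, (0 <= h g x)%R.
Hypothesis s_pdf : forall g, Y g -> \int[mu]_(x in X) (s x g)%:E = 1.
Hypothesis h_pdf : forall x, X x -> \int[nu]_(g in Y) (h g x)%:E = 1.

Local Notation kX := (kX nu Y s h).
Local Notation kY := (kY mu X s h).

Let ms_comp dW (W : measurableType dW) (a : W -> T1) (b : W -> T2) :
  measurable_fun setT a -> measurable_fun setT b ->
  measurable_fun setT (fun w => s (a w) (b w)).
Proof. exact: measurableT_comp_pair ms. Qed.

Let mh_comp dW (W : measurableType dW) (b : W -> T2) (a : W -> T1) :
  measurable_fun setT b -> measurable_fun setT a ->
  measurable_fun setT (fun w => h (b w) (a w)).
Proof. exact: measurableT_comp_pair mh. Qed.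

Lemma kX_ge0 x x' : 0 <= kX x x'.
Proof. by apply: integral_ge0 => g _; rewrite lee_fin mulr_ge0. Qed.

Lemma kY_ge0 g g' : 0 <= kY g g'.
Proof. by apply: integral_ge0 => x _; rewrite lee_fin mulr_ge0. Qed.

Lemma measurable_kX : measurable_fun setT (fun z : T1 * T1 => kX z.1 z.2).
Proof.
apply: (measurable_fun_fubini_tonelli_rect_F measurableT mY
  (f := fun w => (s w.1.2 w.2 * h w.2 w.1.1)%:E)).
- apply/measurable_funTS/measurable_EFinP/measurable_funM.
    by apply: ms_comp => //; apply: measurableT_comp measurable_snd measurable_fst.
  by apply: mh_comp => //; apply: measurableT_comp measurable_fst measurable_fst.
- by move=> w _; rewrite lee_fin mulr_ge0.
Qed.

Lemma measurable_kY g : measurable_fun setT (kY g).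
Proof.
apply: (measurable_fun_fubini_tonelli_rect_G mX measurableT
  (f := fun z => (h z.2 z.1 * s z.1 g)%:E)).
- apply/measurable_funTS/measurable_EFinP/measurable_funM.
    by apply: mh_comp.
  by apply: ms_comp => //; exact: measurable_cst.
- by move=> z _; rewrite lee_fin mulr_ge0.
Qed.

Lemma integral_kY g : Y g -> \int[nu]_(g' in Y) kY g g' = 1.
Proof.
move=> Yg; rewrite -(s_pdf Yg) -(fubini_tonelli_rect mX mY
  (f := fun z => (h z.2 z.1 * s z.1 g)%:E)) //; last 2 first.
- apply/measurable_funTS/measurable_EFinP/measurable_funM.
    by apply: mh_comp.
  by apply: ms_comp => //; exact: measurable_cst.
- by move=> z _; rewrite lee_fin mulr_ge0.
apply: eq_integral => x /set_mem Xx /=.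
under eq_integral do rewrite EFinM.
rewrite ge0_integralZr ?h_pdf ?mul1e ?lee_fin //.
- apply/measurable_funTS/measurable_EFinP.
  exact: (mh_comp (@measurable_id _ _ setT) (measurable_cst x)).
- by move=> g' _; rewrite lee_fin.
Qed.

Section mean.
Variable V : T1 -> R.
Hypotheses (mV : measurable_fun setT V) (V_ge0 : forall x, (0 <= V x)%R).

Lemma measurable_mean :
  measurable_fun setT (fun g => \int[mu]_(x in X) (V x * s x g)%:E).
Proof.
apply: (measurable_fun_fubini_tonelli_rect_G mX measurableT
  (f := fun z => (V z.1 * s z.1 z.2)%:E)).
- apply/measurable_funTS/measurable_EFinP/measurable_funM => //.
  exact: measurableT_comp mV measurable_fst.
- by move=> z _; rewrite lee_fin mulr_ge0.
Qed.

Variable g : T2.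

Let G (w : T2 * T1 * T1) :=
  (V w.2 * s w.2 w.1.1 * (h w.1.1 w.1.2 * s w.1.2 g))%:E.

Let measurable_G : measurable_fun setT G.
Proof.
have mfst2 : measurable_fun setT (fun w : T2 * T1 * T1 => w.1.1).
  exact: measurableT_comp measurable_fst measurable_fst.
have msnd1 : measurable_fun setT (fun w : T2 * T1 * T1 => w.1.2).
  exact: measurableT_comp measurable_snd measurable_fst.
apply/measurable_EFinP; apply: measurable_funM; apply: measurable_funM.
- exact: measurableT_comp mV measurable_snd.
- exact: ms_comp.
- exact: mh_comp.
- by apply: ms_comp => //; exact: measurable_cst.
Qed.

Let G_ge0 w : 0 <= G w.
Proof. by rewrite lee_fin !mulr_ge0. Qed.

Lemma integral_mean_kY :
  \int[nu]_(g' in Y) (\int[mu]_(x' in X) (V x' * s x' g')%:E * kY g g') =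
  \int[mu]_(x in X) ((s x g)%:E * \int[mu]_(x' in X) ((V x')%:E * kX x x')).
Proof.
transitivity (\int[nu]_(g' in Y) \int[mu]_(x in X) \int[mu]_(x' in X) G (g', x, x')).
  apply: eq_integral => g' _.
  rewrite /Defs.kY -ge0_integralZl //; last 3 first.
  - apply/measurable_funTS/measurable_EFinP/measurable_funM.
      exact: (mh_comp (measurable_cst g') (@measurable_id _ _ setT)).
    exact: (ms_comp (@measurable_id _ _ setT) (measurable_cst g)).
  - by move=> x _; rewrite lee_fin mulr_ge0.
  - by apply: integral_ge0 => x _; rewrite lee_fin mulr_ge0.
  apply: eq_integral => x _; rewrite -ge0_integralZr //; last 3 first.
  - apply/measurable_funTS/measurable_EFinP/measurable_funM => //.
    exact: (ms_comp (@measurable_id _ _ setT) (measurable_cst g')).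
  - by move=> x' _; rewrite lee_fin mulr_ge0.
  - by rewrite lee_fin mulr_ge0.
rewrite (fubini_tonelli_rect mY mX
  (f := fun z => \int[mu]_(x' in X) G (z, x'))); last 2 first.
- apply: measurable_funTS; exact: (measurable_fun_fubini_tonelli_rect_F
    measurableT mX (measurable_funTS measurable_G) (fun z _ => G_ge0 z)).
- by move=> z _; exact: integral_ge0.
apply: eq_integral => x _ /=.
rewrite (fubini_tonelli_rect mY mX (f := fun z => G (z.1, x, z.2))); last 2 first.
- apply: measurable_funTS; apply: measurableT_comp measurable_G _.
  apply: measurable_fun_pair => //; apply: measurable_fun_pair => //.
- by move=> z _.
rewrite -ge0_integralZl //; last 3 first.
- apply/measurable_funTS/emeasurable_funM; first exact/measurable_EFinP.
  exact: (measurableT_comp_pair measurable_kX (measurable_cst x)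
    (@measurable_id _ _ setT)).
- by move=> x' _; rewrite mule_ge0 ?lee_fin ?kX_ge0.
- by rewrite lee_fin.
apply: eq_integral => x' _ /=.
rewrite muleA -EFinM /Defs.kX -ge0_integralZl_EFin //; last 3 first.
- by move=> g' _; rewrite lee_fin mulr_ge0.
- apply/measurable_funTS/measurable_EFinP/measurable_funM.
    exact: (ms_comp (measurable_cst x') (@measurable_id _ _ setT)).
  exact: (mh_comp (@measurable_id _ _ setT) (measurable_cst x)).
- by rewrite mulr_ge0.
by apply: eq_integral => g' _; rewrite -EFinM /G /=; congr EFin; ring.
Qed.

Lemma integral_mean_kY_le (lam L : R) : (0 <= lam)%R ->
  (forall x, X x ->
    \int[mu]_(x' in X) ((V x')%:E * kX x x') <= (lam * V x + L)%:E) -> Y g ->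
  \int[nu]_(g' in Y) (\int[mu]_(x' in X) (V x' * s x' g')%:E * kY g g') <=
  lam%:E * \int[mu]_(x in X) (V x * s x g)%:E + L%:E.
Proof.
move=> lam0 drift Yg.
have msg : measurable_fun setT (fun x => (s x g)%:E).
  apply/measurable_EFinP.
  exact: (ms_comp (@measurable_id _ _ setT) (measurable_cst g)).
have mlamV : measurable_fun setT (fun x => (lam * V x)%:E).
  by apply/measurable_EFinP/measurable_funM => //; exact: measurable_cst.
have drift_ge0 x : X x -> 0 <= (lam * V x)%:E + L%:E.
  move=> Xx; rewrite -EFinD; apply: le_trans (drift x Xx).
  by apply: integral_ge0 => x' _; rewrite mule_ge0 ?lee_fin ?kX_ge0.
rewrite integral_mean_kY.
apply: (@le_trans _ _ (\int[mu]_(x in X) (((lam * V x)%:E + L%:E) * (s x g)%:E))).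
  apply: ge0_le_integral => //.
  - by move=> x _; rewrite mule_ge0 ?lee_fin //; apply: integral_ge0 => x' _;
      rewrite mule_ge0 ?lee_fin ?kX_ge0.
  - apply: measurable_funTS; apply: emeasurable_funM => //.
    apply: (measurable_fun_fubini_tonelli_rect_F measurableT mX
      (f := fun z => (V z.2)%:E * kX z.1 z.2)).
    + apply/measurable_funTS/emeasurable_funM; last exact: measurable_kX.
      exact/measurable_EFinP/measurableT_comp.
    + by move=> z _; rewrite mule_ge0 ?lee_fin ?kX_ge0.
  - apply: measurable_funTS; apply: emeasurable_funM => //.
    by apply: emeasurable_funD => //; exact: measurable_cst.
  - move=> x Xx; rewrite muleC -EFinD.
    by apply: lee_wpmul2r; [rewrite lee_fin | exact: drift].
rewrite integral_shift //; last by move=> x _; rewrite lee_fin mulr_ge0.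
- under eq_integral do rewrite -EFinM -mulrA EFinM.
  rewrite ge0_integralZl_EFin //; first by move=> x _; rewrite lee_fin mulr_ge0.
  apply/measurable_funTS/measurable_EFinP/measurable_funM => //.
  exact/measurable_EFinP.
- exact: measurable_funTS.
- by move=> x _; rewrite lee_fin.
- exact: s_pdf.
- exact: measurable_funTS.
Qed.

Lemma drift_Vtilde_kY (lam L c : R) : (0 <= lam)%R ->
  (forall x, X x ->
    \int[mu]_(x' in X) ((V x')%:E * kX x x') <= (lam * V x + L)%:E) ->
  (forall g', Y g' -> 0 <= Vtilde mu X s V c g') -> Y g ->
  \int[nu]_(g' in Y) (Vtilde mu X s V c g' * kY g g') <=
  lam%:E * Vtilde mu X s V c g + (L + c * (1 - lam))%:E.
Proof.
move=> lam0 drift Vtilde_ge0 Yg.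
rewrite /Vtilde integral_shift //; last 5 first.
- exact/measurable_funTS/measurable_kY.
- by move=> g' _; exact: kY_ge0.
- exact: integral_kY.
- exact/measurable_funTS/measurable_mean.
- by move=> g' _; apply: integral_ge0 => x _; rewrite lee_fin mulr_ge0.
apply: le_trans (leeD2r _ (integral_mean_kY_le lam0 drift Yg)) _.
move: (\int[mu]_(x in X) _) => m.
rewrite muleDr ?fin_num_adde_defl // -EFinM -!addeA -!EFinD.
by rewrite (_ : lam * c + (L + c * (1 - lam)) = L + c)%R //; ring.
Qed.

End mean.

End marginal_chains.

Section extend0.
Context (R : realType) (T1 T2 : Type) (A : set T1) (B : set T2).

Definition extend0 (f : T1 -> T2 -> R) x y : R :=
  if (x \in A) && (y \in B) then f x y else 0%R.

Lemma extend0E f x y : A x -> B y -> extend0 f x y = f x y.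
Proof. by move=> Ax By; rewrite /extend0 !mem_set. Qed.

Lemma extend0_ge0 f : (forall x y, A x -> B y -> (0 <= f x y)%R) ->
  forall x y, (0 <= extend0 f x y)%R.
Proof.
move=> f0 x y; rewrite /extend0.
by case: ifPn => // /andP[/set_mem Ax /set_mem By]; exact: f0.
Qed.

End extend0.

Lemma measurable_extend0 (R : realType) d1 d2 (T1 : measurableType d1)
    (T2 : measurableType d2) (A : set T1) (B : set T2) (f : T1 -> T2 -> R) :
  measurable A -> measurable B -> measurable_fun (A `*` B) (fun z => f z.1 z.2) ->
  measurable_fun setT (fun z => extend0 A B f z.1 z.2).
Proof.
move=> mA mB mf.
rewrite (_ : (fun z => _) = patch (fun=> 0%R) (A `*` B) (fun z : T1 * T2 => f z.1 z.2)).
  exact/(measurable_restrictT _ (measurableX mA mB)).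
by apply/funext => -[x y]; rewrite /extend0 patchE in_setX.
Qed.

Section extend0_kernels.
Context (R : realType) d1 d2 (T1 : measurableType d1) (T2 : measurableType d2).
Variables (mu : {measure set T1 -> \bar R}) (nu : {measure set T2 -> \bar R}).
Variables (X : set T1) (Y : set T2) (s : T1 -> T2 -> R) (h : T2 -> T1 -> R).

Lemma kX_extend0 x x' : X x -> X x' ->
  kX nu Y (extend0 X Y s) (extend0 Y X h) x x' = kX nu Y s h x x'.
Proof.
by move=> Xx Xx'; apply: eq_integral => g /set_mem Yg; rewrite !extend0E.
Qed.

Lemma kY_extend0 g g' : Y g -> Y g' ->
  kY mu X (extend0 X Y s) (extend0 Y X h) g g' = kY mu X s h g g'.
Proof.
by move=> Yg Yg'; apply: eq_integral => x /set_mem Xx; rewrite !extend0E.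
Qed.

Lemma Vtilde_extend0 (V : T1 -> R) c g : Y g ->
  Vtilde mu X (extend0 X Y s) (patch (fun=> 0%R) X V) c g = Vtilde mu X s V c g.
Proof.
move=> Yg; congr (_ + _); apply: eq_integral => x Xx.
by rewrite extend0E ?patchT //; exact/set_mem.
Qed.

End extend0_kernels.

Theorem proposition2 (R : realType)
  (d1 : measure_display) (T1 : measurableType d1) (mu : {measure set T1 -> \bar R})
  (d2 : measure_display) (T2 : measurableType d2) (nu : {measure set T2 -> \bar R})
  (X : set T1) (Y : set T2)
  (s : T1 -> T2 -> R) (h : T2 -> T1 -> R)
  (V : T1 -> R) (lam L c : R) :
  sigma_finite setT mu -> sigma_finite setT nu ->
  measurable X -> measurable Y ->
  measurable_fun (X `*` Y) (fun z : T1 * T2 => s z.1 z.2) ->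
  measurable_fun (Y `*` X) (fun z : T2 * T1 => h z.1 z.2) ->
  (forall g, Y g -> is_pdf mu X (fun x => s x g)) ->
  (forall x, X x -> is_pdf nu Y (fun g => h g x)) ->
  measurable_fun X V -> (forall x, X x -> (0 <= V x)%R) ->
  (0 <= lam)%R -> (lam < 1)%R ->
  (forall x, X x ->
     \int[mu]_(x' in X) ((V x')%:E * kX nu Y s h x x') <= (lam * V x + L)%:E) ->
  (forall g, Y g -> Vtilde mu X s V c g \is a fin_num /\ 0 <= Vtilde mu X s V c g) ->
  forall g, Y g ->
    \int[nu]_(g' in Y) (Vtilde mu X s V c g' * kY mu X s h g g')
      <= lam%:E * Vtilde mu X s V c g + (L + c * (1 - lam))%:E.
Proof.
move=> mu_sf nu_sf mX mY ms mh s_pdf h_pdf mV V_ge0 lam_ge0 _ drift Vtilde_fin_ge0 g Yg.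
rewrite -(Vtilde_extend0 mu X s V c Yg).
under eq_integral => g' /set_mem Yg' do
  rewrite -(Vtilde_extend0 mu X s V c Yg') -(kY_extend0 mu X s h Yg Yg').
apply: (drift_Vtilde_kY (mu := sigma_finite_measure_of mu_sf)
  (nu := sigma_finite_measure_of nu_sf)) => //.
- exact: measurable_extend0.
- exact: measurable_extend0.
- by apply: extend0_ge0 => x g' Xx /s_pdf[_ [s_ge0 _]]; exact: s_ge0.
- by apply: extend0_ge0 => g' x Yg' /h_pdf[_ [h_ge0 _]]; exact: h_ge0.
- move=> g' Yg'; have [_ [_ <-]] := s_pdf g' Yg'.
  by apply: eq_integral => x /set_mem Xx; rewrite extend0E.
- move=> x Xx; have [_ [_ <-]] := h_pdf x Xx.
  by apply: eq_integral => g' /set_mem Yg'; rewrite extend0E.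
- exact/(measurable_restrictT _ mX).
- by move=> x; rewrite patchE; case: ifPn => // /set_mem; exact: V_ge0.
- move=> x Xx; rewrite patchT ?inE //.
  under eq_integral => x' /set_mem Xx' do rewrite patchT ?inE // kX_extend0 //.
  exact: drift.
- by move=> g' Yg'; rewrite Vtilde_extend0 //; exact: (Vtilde_fin_ge0 g' Yg').2.
Qed.
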